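(* Let $\alpha\in\mathbb R^+$, let $q$ be a prime power, and let $n,h,k\in\mathbb Z^+$ satisfy $n\ge(2+k)h+\log_q(2/\alpha)$ and $k\ge 2q^h(1/\alpha-1)$. If $M$ is a $\mathrm{GF}(q)$-representable matroid of rank $r\ge n$ with $\epsilon(M)\ge\alpha\frac{q^r-1}{q-1}$, then for each independent set $C$ of $M$ of rank $hk$, there exists $C'\subseteq C$ such that $M/C'$ has a restriction isomorphic to $\mathrm{AG}(h,q)$.
   Context: $\epsilon(M)$ denotes the number of elements of the simplification of $M$ (the number of rank-one flats). $\frac{q^r-1}{q-1}=|\mathrm{PG}(r-1,q)|$. *)

From HB Require Import structures.
From mathcomp Require Import all_boot all_order all_algebra.
Set Implicit Arguments. Unset Strict Implicit. Unset Printing Implicit Defensive.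
Import GRing.Theory.

Record matroid (E : finType) := Matroid {
  mrank :> {set E} -> nat;
  mrank_card : forall X : {set E}, mrank X <= #|X|;
  mrank_mono : forall X Y : {set E}, X \subset Y -> mrank X <= mrank Y;
  mrank_submod : forall X Y : {set E},
      mrank (X :|: Y) + mrank (X :&: Y) <= mrank X + mrank Y
}.

Definition rk (E : finType) (M : matroid E) : nat := M [set: E].

Definition indep (E : finType) (M : matroid E) (I : {set E}) : bool :=
  M I == #|I|.

Definition flat (E : finType) (M : matroid E) (F : {set E}) : bool :=
  [forall e, (e \notin F) ==> (M F < M (e |: F))].

(* epsilon(M) = number of rank-one flats = number of points of the
   simplification *)
Definition eps (E : finType) (M : matroid E) : nat :=
  #|[set F : {set E} | flat M F & M F == 1]|.

Definition vrank (F : fieldType) (E : finType) m (A : E -> 'rV[F]_m)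
    (S : {set E}) : nat :=
  \rank (\sum_(e in S) <<A e>>)%MS.

Definition GFq_representable (q : nat) (E : finType) (M : matroid E) : Prop :=
  exists (F : finFieldType), #|F| = q /\
    exists (m : nat) (A : E -> 'rV[F]_m), forall S : {set E}, M S = vrank A S.

(* The affine geometry AG(h, F): ground set F^h, a set of points has rank
   equal to the linear rank of the lifted vectors (1, v) in F^(1+h). *)
Definition AG_rank (F : finFieldType) (h : nat) (S : {set 'rV[F]_h}) : nat :=
  \rank (\sum_(v in S) <<row_mx (1%:M : 'rV[F]_1) v>>)%MS.

Definition contr_rank (E : finType) (M : matroid E) (C X : {set E}) : nat :=
  M (X :|: C) - M C.

Definition contr_has_AG_restriction (E : finType) (M : matroid E)
    (C : {set E}) (h q : nat) : Prop :=
  exists (F : finFieldType), #|F| = q /\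
  exists (X : {set E}) (f : E -> 'rV[F]_h),
    [/\ [disjoint X & C],
        {in X &, injective f},
        f @: X = [set: 'rV[F]_h] &
        forall Y : {set E}, Y \subset X ->
          contr_rank M C Y = AG_rank (f @: Y)].

Definition prime_power (q : nat) : Prop :=
  exists p e : nat, [/\ prime p, 0 < e & q = p ^ e].

(* Represent M by vectors A e over F = GF(q) and let P be the set of nonzero
   vectors lying on the points of M, so that |P| >= (q - 1) eps(M).  Split C
   into k blocks of h elements and let W_j be the span of the blocks j, ..., k-1.
   If some x outside <C> satisfies x + <block j> \subset P + W_(j+1), then
   choosing for every v in F^h an element e with A e congruent modulo W_(j+1)
   to a multiple of x + v B_j (B_j a basis of <block j>) embeds AG(h, q) in
   M / (blocks j+1, ..., k-1).  Otherwise a double count shows that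
   (P + W_j) minus <C> shrinks by the factor 1 - q^-h from j to j + 1; hence
   |P \ <C>| <= (1 - q^-h)^k q^r, which is too small for the assumed density
   of M once n and k are as large as required. *)

From HB Require Import structures.
From mathcomp Require Import all_boot all_order all_algebra.
From mathcomp Require Import zify.
Set Implicit Arguments. Unset Strict Implicit. Unset Printing Implicit Defensive.
Import GRing.Theory.

Section FamilySpan.
Local Open Scope ring_scope.
Variables (F : fieldType) (E : finType) (m : nat) (A : E -> 'rV[F]_m).

Definition fspan (S : {set E}) : 'M[F]_m := (\sum_(e in S) <<A e>>)%MS.

Lemma fspan_sup e (S : {set E}) : e \in S -> (A e <= fspan S)%MS.
Proof. by move=> eS; apply: (sumsmx_sup e) => //; rewrite genmxE. Qed.

Lemma fspan_subP (S : {set E}) n (U : 'M_(n, m)) :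
  reflect (forall e, e \in S -> (A e <= U)%MS) (fspan S <= U)%MS.
Proof.
apply: (iffP sumsmx_subP) => sub_U e eS; last by rewrite genmxE; apply: sub_U.
by rewrite -genmxE; apply: sub_U.
Qed.

Lemma fspanS (S1 S2 : {set E}) : S1 \subset S2 -> (fspan S1 <= fspan S2)%MS.
Proof. by move=> /subsetP sS12; apply/fspan_subP => e /sS12; apply: fspan_sup. Qed.

Lemma fspanU (S1 S2 : {set E}) : (fspan (S1 :|: S2) :=: fspan S1 + fspan S2)%MS.
Proof.
apply/eqmxP/andP; split; last by rewrite addsmx_sub !fspanS ?subsetUl ?subsetUr.
apply/fspan_subP => e; rewrite inE => /orP[] eS.
  exact: submx_trans (fspan_sup eS) (addsmxSl _ _).
exact: submx_trans (fspan_sup eS) (addsmxSr _ _).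
Qed.

Lemma rank_fspan_le (S : {set E}) : (\rank (fspan S) <= #|S|)%N.
Proof.
rewrite -sum1_card.
apply: (big_ind2 (fun (U : 'M_m) n => \rank U <= n)%N) => [|U1 n1 U2 n2 le1 le2|e _].
- by rewrite mxrank0.
- exact: leq_trans (mxrank_adds_leqif _ _) (leq_add le1 le2).
- by rewrite genmxE rank_leq_row.
Qed.

Lemma fspan_indepU (S1 S2 : {set E}) :
    \rank (fspan (S1 :|: S2)) = (#|S1| + #|S2|)%N ->
  \rank (fspan S1) = #|S1| /\
  forall v : 'rV_m, (v <= fspan S1)%MS -> (v <= fspan S2)%MS -> v = 0.
Proof.
rewrite fspanU => rkU.
have := mxrank_sum_cap (fspan S1) (fspan S2).
have := rank_fspan_le S1; have := rank_fspan_le S2.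
rewrite rkU => le2 le1 sum_cap; split; first lia.
have /eqP cap0 : (fspan S1 :&: fspan S2)%MS == 0 by rewrite -mxrank_eq0; lia.
by move=> v v1 v2; apply/eqP; rewrite -submx0 -cap0 sub_capmx v1.
Qed.

Lemma fspan_indepS (C S : {set E}) :
  \rank (fspan C) = #|C| -> S \subset C -> \rank (fspan S) = #|S|.
Proof.
move=> indC /setIidPr <-; have := @fspan_indepU (C :&: S) (C :\: S).
by rewrite setID cardsID => /(_ indC) [].
Qed.

End FamilySpan.

Section RowSpaces.
Local Open Scope ring_scope.

Lemma rank1_eqmx (F : fieldType) n m (U : 'M[F]_(n, m)) (v : 'rV_m) :
  \rank U = 1%nat -> v != 0 -> (v <= U)%MS -> (v :=: U)%MS.
Proof.
move=> rkU nz vU; apply/eqmxP; have [_ <-] := mxrank_leqif_eq vU.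
by rewrite rkU rank_rV nz.
Qed.

Section FiniteSubspaces.
Variables (F : finFieldType) (n m : nat) (U : 'M[F]_(n, m)).

Lemma card_submx : #|[set v : 'rV[F]_m | (v <= U)%MS]| = (#|F| ^ \rank U)%N.
Proof.
have -> : [set v : 'rV[F]_m | (v <= U)%MS] =
           [set z *m row_base U | z in [set: 'rV_(\rank U)]].
  apply/setP => v; rewrite inE -[(v <= U)%MS](eq_row_base U).
  by apply/submxP/imsetP=> [[z ->]|[z _ ->]]; exists z; rewrite ?inE.
rewrite card_imset; last exact: row_free_inj (row_base_free U).
by rewrite cardsT card_mx mul1n.
Qed.

Lemma card_submx_nz :
  #|[set v : 'rV[F]_m | (v <= U)%MS & v != 0]| = (#|F| ^ \rank U - 1)%N.
Proof.
rewrite -card_submx (cardsD1 0 [set v | (v <= U)%MS]) inE sub0mx add1n subn1 /=.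
by apply: eq_card => v; rewrite !inE andbC.
Qed.

End FiniteSubspaces.

Lemma card_submxD (F : finFieldType) n1 n2 m (U : 'M[F]_(n1, m)) (V : 'M[F]_(n2, m)) :
    (U <= V)%MS ->
  #|[set v : 'rV[F]_m | (v <= V)%MS] :\: [set v | (v <= U)%MS]| =
  (#|F| ^ \rank V - #|F| ^ \rank U)%N.
Proof.
move=> sUV; rewrite cardsD (setIidPr _) ?card_submx //.
by apply/subsetP => v; rewrite !inE => /submx_trans; apply.
Qed.

Lemma col_mx_free_mod (F : fieldType) m h (x : 'rV[F]_m) (B : 'M_(h, m)) n1 n2
    (L : 'M_(n1, m)) (W : 'M_(n2, m)) :
    ~~ (x <= L)%MS -> (B <= L)%MS -> (W <= L)%MS -> row_free B ->
    (forall v : 'rV_m, (v <= B)%MS -> (v <= W)%MS -> v = 0) ->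
  forall r : 'rV_(1 + h), (r *m col_mx x B <= W)%MS -> r = 0.
Proof.
move=> xL BL WL freeB capBW r; rewrite -[r]hsubmxK mul_row_col.
rewrite [lsubmx r]mx11_scalar mul_scalar_mx; set c := lsubmx r 0 0; set z := rsubmx r.
move=> rW; have zB : (z *m B <= B)%MS := submxMl z B.
have c0 : c = 0.
  apply/eqP; apply: contraNT xL => nz_c; rewrite -[x](scalerK nz_c) scalemx_sub //.
  rewrite -(addrK (z *m B) (c *: x)) addmx_sub ?eqmx_opp //.
    exact: submx_trans rW WL.
  exact: submx_trans zB BL.
move: rW; rewrite c0 scale0r add0r => /(capBW _ zB) /eqP.
rewrite mulmx_free_eq0 // => /eqP ->.
by rewrite raddf0 row_mx0.
Qed.

Lemma addsmx_rV_eqmx (F : fieldType) m n (a p w : 'rV[F]_m) (W : 'M_(n, m)) :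
  p != 0 -> (p <= a)%MS -> (w - p <= W)%MS -> (a + W :=: w + W)%MS.
Proof.
move=> nz_p pa wpW; have rk_a : \rank a = 1%N.
  apply/eqP; rewrite eqn_leq rank_leq_row /=.
  by apply: leq_trans (mxrankS pa); rewrite rank_rV nz_p.
have eq_pa := rank1_eqmx rk_a nz_p pa.
have pwW : (p <= w + W)%MS.
  have -> : p = w + - (w - p) by rewrite opprB addrC subrK.
  by rewrite addmx_sub_adds ?eqmx_opp.
apply/eqmxP/andP; split; rewrite addsmx_sub addsmxSr andbT.
  by rewrite -eq_pa.
by rewrite -(subrK p w) addrC addmx_sub_adds.
Qed.

Lemma row_mx1_neq0 (F : fieldType) h (v : 'rV[F]_h) : row_mx (1%:M : 'rV_1) v != 0.
Proof.
apply/negP => /eqP/(congr1 (fun r : 'rV_(1 + h) => r 0 (lshift h 0))).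
by rewrite row_mxEl !mxE eqxx; apply/eqP/oner_neq0.
Qed.

End RowSpaces.

Section RepresentedMatroid.
Local Open Scope ring_scope.
Variables (F : finFieldType) (E : finType) (m : nat) (A : E -> 'rV[F]_m).
Variable M : matroid E.
Hypothesis M_rank : forall S, M S = \rank (fspan A S).

Definition point_vectors := [set v : 'rV[F]_m | (v != 0) && [exists e, (v <= A e)%MS]].

Definition point_class (v : 'rV[F]_m) := [set e | (A e <= v)%MS].

Lemma flat_fspan_closed (X : {set E}) g :
  flat M X -> (A g <= fspan A X)%MS -> g \in X.
Proof.
move=> /forallP/(_ g) flatX gX; apply: contraTT flatX => notgX.
rewrite notgX /= -leqNgt !M_rank mxrankS //.
by apply/fspan_subP => e /setU1P[->|/(fspan_sup A)].
Qed.

Lemma rank1_flat_fiber (X : {set E}) (v : 'rV[F]_m) :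
    flat M X -> M X = 1%N -> v != 0 -> (v <= fspan A X)%MS ->
  v \in point_vectors /\ point_class v = X.
Proof.
rewrite M_rank => flatX rkX nz_v vX; have eq_vX := rank1_eqmx rkX nz_v vX.
split; last first.
  apply/setP => e; rewrite inE eq_vX.
  by apply/idP/idP => [/flat_fspan_closed->|/fspan_sup].
have [e eX nz_e] : exists2 e, e \in X & A e != 0.
  case: (pickP [pred e in X | A e != 0]) => [e /andP[]|A0]; first by exists e.
  suff: fspan A X == 0 by rewrite -mxrank_eq0 rkX.
  rewrite -submx0; apply/fspan_subP => e eX.
  by move/(_ e): A0; rewrite /= eX /= => /negbFE/eqP->; rewrite sub0mx.
rewrite inE nz_v; apply/existsP; exists e.
by rewrite eq_vX -(rank1_eqmx rkX nz_e (fspan_sup A eX)).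
Qed.

(* Each rank-one flat X owns the q - 1 nonzero vectors of its span, and
   point_class sends them back to X. *)
Lemma eps_le_points : ((#|F| - 1) * eps M <= #|point_vectors|)%N.
Proof.
set P1 := [set X : {set E} | flat M X & M X == 1%N].
have le_fiber X : X \in P1 ->
    (#|F| - 1 <= #|[set v in point_vectors | point_class v == X]|)%N.
  rewrite inE => /andP[flatX /eqP rkX].
  rewrite -(expn1 #|F|) -[X in expn _ X]rkX M_rank -card_submx_nz subset_leq_card //.
  apply/subsetP => v; rewrite inE => /andP[vX nz_v].
  have [vP vX_class] := rank1_flat_fiber flatX rkX nz_v vX.
  by rewrite inE vP vX_class eqxx.
rewrite /eps -/P1 mulnC -sum_nat_const (leq_trans (leq_sum _ le_fiber)) //.
rewrite -sum1_card (bigID (fun v => point_class v \in P1)) /=.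
rewrite (partition_big point_class (mem P1)) => [|v /andP[] //].
apply: leq_trans (leq_addr _ _); apply: eq_leq; apply: eq_bigr => X X_P1.
rewrite -sum1_card; apply: eq_bigl => v; rewrite inE.
by case: (point_class v =P X) => [->|]; rewrite ?X_P1 ?andbT ?andbF.
Qed.

Lemma card_points_le_full :
  (#|point_vectors| <= #|F| ^ \rank (fspan A [set: E]) - 1)%N.
Proof.
rewrite -card_submx_nz subset_leq_card //; apply/subsetP => v.
rewrite !inE => /andP[nz_v /existsP[e ve]]; rewrite nz_v andbT.
exact: submx_trans ve (fspan_sup A (in_setT e)).
Qed.

End RepresentedMatroid.

Lemma double_count (I J : finType) (X : {set I}) (U : {set J}) (R : I -> J -> bool) :
  \sum_(x in X) #|[set u in U | R x u]| = \sum_(u in U) #|[set x in X | R x u]|.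
Proof.
under eq_bigr do rewrite -sum1dep_card big_mkcondr.
rewrite exchange_big; apply: eq_bigr => u _.
by rewrite -sum1dep_card big_mkcondr.
Qed.

Section Blocks.
Variables (E : finType) (C : {set E}) (h : nat).

Definition block j := [set x in take h (drop (j * h) (enum C))].
Definition tail j := [set x in drop (j * h) (enum C)].

Lemma card_uniq_set (s : seq E) : uniq s -> #|[set x in s]| = size s.
Proof. by move=> s_uniq; rewrite cardsE; apply/card_uniqP. Qed.

Lemma tailS j : tail j = block j :|: tail j.+1.
Proof.
apply/setP => x; rewrite !inE mulSn -drop_drop.
by rewrite -{1}(cat_take_drop h (drop (j * h) (enum C))) mem_cat.
Qed.

Lemma card_tailS j : #|tail j| = (#|block j| + #|tail j.+1|)%N.
Proof.
rewrite !card_uniq_set ?take_uniq ?drop_uniq ?enum_uniq //.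
by rewrite mulSn -drop_drop -size_cat cat_take_drop.
Qed.

Lemma card_block j : (j.+1 * h <= #|C|)%N -> #|block j| = h.
Proof.
rewrite cardE => le_jh; rewrite card_uniq_set ?take_uniq ?drop_uniq ?enum_uniq //.
rewrite size_takel // size_drop; move: le_jh; rewrite mulSn; lia.
Qed.

Lemma tail_sub j : tail j \subset C.
Proof. by apply/subsetP => x; rewrite inE => /mem_drop; rewrite mem_enum. Qed.

End Blocks.

Section AffineCopy.
Local Open Scope ring_scope.
Variables (F : finFieldType) (E : finType) (m h : nat) (A : E -> 'rV[F]_m).
Variables (T : {set E}) (Phi : 'M[F]_(1 + h, m)) (g : 'rV[F]_h -> E).

Let W := fspan A T.

Hypothesis Phi_indep : forall r : 'rV_(1 + h), (r *m Phi <= W)%MS -> r = 0.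
Hypothesis g_line : forall v, (A (g v) + W :=: row_mx 1%:M v *m Phi + W)%MS.

Lemma AG_lift_notin v : g v \notin T.
Proof.
apply/negP => gvT; have /negP[] := row_mx1_neq0 v; apply/eqP; apply: Phi_indep.
apply: submx_trans (addsmxSl _ W) _; rewrite -g_line addsmx_sub submx_refl andbT.
exact: fspan_sup.
Qed.

Lemma AG_lift_inj : injective g.
Proof.
move=> v v' eq_g.
have : (row_mx 1%:M v' *m Phi <= row_mx 1%:M v *m Phi + W)%MS.
  by rewrite -g_line eq_g g_line addsmxSl.
case/sub_addsmxP=> [[D w]] /= eq_v'.
have /eqP : row_mx 1%:M v' - D *m row_mx 1%:M v = 0.
  by apply: Phi_indep; rewrite mulmxBl -mulmxA eq_v' addrC addKr submxMl.
rewrite subr_eq0 mul_mx_row mulmx1 => /eqP /eq_row_mx [<-].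
by rewrite mul1mx.
Qed.

Lemma fspan_AG_lift (V : {set 'rV[F]_h}) :
  (fspan A (g @: V :|: T) :=: (\sum_(v in V) <<row_mx 1%:M v>>)%MS *m Phi + W)%MS.
Proof.
apply/eqmxP/andP; split.
  apply/fspan_subP => e /setUP[/imsetP[v vV ->]|eT].
    apply: submx_trans (addsmxSl _ W) _; rewrite g_line addsmxS //.
    by rewrite submxMr // (sumsmx_sup v) ?genmxE.
  by apply: submx_trans (addsmxSr _ W); apply: fspan_sup.
have W_sub : (W <= fspan A (g @: V :|: T))%MS by rewrite fspanS ?subsetUr.
rewrite addsmx_sub W_sub andbT sumsmxMr_gen; apply/sumsmx_subP => v vV.
rewrite genmxE (eqmxMr _ (genmxE _)); apply: submx_trans (addsmxSl _ W) _.
by rewrite -g_line addsmx_sub W_sub fspan_sup // inE imset_f.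
Qed.

Lemma rank_mulmx_adds n (R : 'M_(n, 1 + h)) :
  \rank (R *m Phi + W)%MS = (\rank R + \rank W)%N.
Proof.
have Phi_free : row_free Phi.
  by apply: inj_row_free => r rPhi0; apply: Phi_indep; rewrite rPhi0 sub0mx.
rewrite mxrank_disjoint_sum ?mxrankMfree //.
apply/eqP/rowV0P => y; rewrite sub_capmx => /andP[/submxP[z ->]].
by rewrite mulmxA => /Phi_indep ->; rewrite mul0mx.
Qed.

Variable M : matroid E.
Hypothesis M_rank : forall S, M S = \rank (fspan A S).

Lemma contr_AG_of_lifts : contr_has_AG_restriction M T h #|F|.
Proof.
pose ginv e := odflt 0 [pick v | g v == e].
have ginvK : cancel g ginv.
  move=> v; rewrite /ginv; case: pickP => [v' /eqP/AG_lift_inj //|/(_ v)].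
  by rewrite eqxx.
exists F; split=> //; exists (g @: setT), ginv; split.
- rewrite disjoint_subset; apply/subsetP => _ /imsetP[v _ ->].
  by rewrite inE AG_lift_notin.
- by move=> _ _ /imsetP[v _ ->] /imsetP[v' _ ->]; rewrite !ginvK => ->.
- by apply/setP => v; rewrite inE -(ginvK v) imset_f ?imset_f.
move=> Y /subsetP sYX; have {1}-> : Y = g @: (ginv @: Y).
  rewrite -imset_comp -[LHS]imset_id; apply: eq_in_imset => e /sYX/imsetP[v _ ->].
  by rewrite /= ginvK.
by rewrite /contr_rank !M_rank fspan_AG_lift rank_mulmx_adds addnK.
Qed.

End AffineCopy.

Section Cosets.
Local Open Scope ring_scope.
Variables (F : finFieldType) (E : finType) (m : nat) (A : E -> 'rV[F]_m).
Variables (C : {set E}) (h k : nat).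
Hypothesis card_C : #|C| = (h * k)%N.
Hypothesis indep_C : \rank (fspan A C) = #|C|.

Let L := fspan A C.
Let Lblock j := fspan A (block C h j).
Let Ltail j := fspan A (tail C h j).

Definition points_plus j :=
  [set v | [exists p in point_vectors A, (v - p <= Ltail j)%MS]].
Definition outside j := points_plus j :\: [set v | (v <= L)%MS].

Lemma Ltail_sub j : (Ltail j <= L)%MS.
Proof. exact/fspanS/tail_sub. Qed.

Lemma Lblock_sub_tail j : (Lblock j <= Ltail j)%MS.
Proof. by apply: fspanS; rewrite tailS subsetUl. Qed.

Lemma Ltail_succ j : (Ltail j.+1 <= Ltail j)%MS.
Proof. by apply: fspanS; rewrite (tailS C h j) subsetUr. Qed.

Lemma block_indep j : (j < k)%N ->
  \rank (Lblock j) = h /\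
  forall v : 'rV_m, (v <= Lblock j)%MS -> (v <= Ltail j.+1)%MS -> v = 0.
Proof.
move=> lt_jk; have := fspan_indepS indep_C (tail_sub C h j).
rewrite {1}tailS card_tailS => /fspan_indepU[-> cap0]; split=> //.
by apply: card_block; rewrite card_C mulnC leq_mul2l lt_jk orbT.
Qed.

Lemma outside_shift j u y :
  (u <= Lblock j)%MS -> y \in outside j.+1 -> y - u \in outside j.
Proof.
move=> uB; rewrite !inE => /andP[yL /existsP[p /andP[pP yp]]].
have uL : (u <= L)%MS := submx_trans uB (submx_trans (Lblock_sub_tail j) (Ltail_sub j)).
apply/andP; split.
  by apply: contra yL => yuL; rewrite -(subrK u y) addmx_sub.
apply/existsP; exists p; rewrite pP addrAC addmx_sub ?eqmx_opp //.
  exact: submx_trans yp (Ltail_succ j).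
exact: submx_trans uB (Lblock_sub_tail j).
Qed.

Definition witness j (x : 'rV[F]_m) :=
  ~~ (x <= L)%MS && [forall u, (u <= Lblock j)%MS ==> (x + u \in points_plus j.+1)].

Lemma outside_step j : (j < k)%N -> (forall x, ~~ witness j x) ->
  (#|outside j.+1| * #|F| ^ h <= (#|F| ^ h - 1) * #|outside j|)%N.
Proof.
move=> lt_jk no_witness; have [rk_block _] := block_indep lt_jk.
pose B := [set u : 'rV[F]_m | (u <= Lblock j)%MS].
have card_B : #|B| = (#|F| ^ h)%N by rewrite card_submx rk_block.
have fiber_le x : x \in outside j ->
    (#|[set u in B | (x + u)%R \in outside j.+1]| <= #|F| ^ h - 1)%N.
  rewrite !inE => /andP[xL _]; move/(_ x): no_witness.
  rewrite /witness xL negb_forall => /existsP[u0]; rewrite negb_imply => /andP[u0B xu0].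
  rewrite -card_B (cardsD1 u0 B) inE u0B add1n subn1 subset_leq_card //.
  apply/subsetP => u; rewrite !inE => /andP[uB /andP[_ xu]]; rewrite uB andbT.
  by apply/negP => /eqP uu0; move: xu0; rewrite -uu0 inE xu.
have shift_card u : u \in B ->
    #|[set x in outside j | x + u \in outside j.+1]| = #|outside j.+1|.
  rewrite inE => uB; rewrite -[RHS](card_imset _ (subIr u)); apply: eq_card => x.
  rewrite [in LHS]inE; apply/andP/imsetP => [[_ xu]|[y yN ->]].
    by exists (x + u); rewrite ?addrK.
  by rewrite subrK outside_shift.
apply: (@leq_trans (\sum_(x in outside j) #|[set u in B | (x + u)%R \in outside j.+1]|)).
  by rewrite double_count (eq_bigr _ shift_card) sum_nat_const card_B mulnC.
by rewrite mulnC -sum_nat_const leq_sum.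
Qed.

Lemma outside_iter : (forall j, (j < k)%N -> forall x, ~~ witness j x) ->
  forall j, (j <= k)%N ->
  (#|outside j| * #|F| ^ (h * j) <= (#|F| ^ h - 1) ^ j * #|outside 0|)%N.
Proof.
move=> no_witness; elim=> [|j IHj] lt_jk; first by rewrite muln0 !expn0 muln1 mul1n.
rewrite mulnS expnD mulnA expnS.
apply: leq_trans (leq_mul (outside_step lt_jk (no_witness j lt_jk)) (leqnn _)) _.
by rewrite -!mulnA leq_mul2l IHj ?orbT // ltnW.
Qed.

Lemma card_outside0 :
  (#|outside 0| <= #|F| ^ \rank (fspan A [set: E]) - #|F| ^ (h * k))%N.
Proof.
have L_full : (L <= fspan A [set: E])%MS by apply/fspanS/subsetT.
rewrite -card_C -indep_C -card_submxD // subset_leq_card //.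
apply/subsetP => v; rewrite !inE => /andP[vL /existsP[p /andP[pP vp]]].
rewrite vL -(subrK p v) addmx_sub //.
  exact: submx_trans vp (submx_trans (Ltail_sub 0) L_full).
move: pP; rewrite inE => /andP[_ /existsP[e pe]].
exact: submx_trans pe (fspan_sup A (in_setT e)).
Qed.

Lemma card_points_le :
  (#|point_vectors A| <= #|outside k| + (#|F| ^ (h * k) - 1))%N.
Proof.
rewrite -(cardsID [set v | (v <= L)%MS] (point_vectors A)) addnC leq_add //.
  apply/subset_leq_card/setSD/subsetP => p pP; rewrite inE.
  by apply/existsP; exists p; rewrite pP subrr sub0mx.
rewrite -card_C -indep_C -card_submx_nz subset_leq_card //.
by apply/subsetP => v; rewrite !inE => /andP[/andP[nz_v _] ->].
Qed.

Lemma card_points_no_witness : (forall j, (j < k)%N -> forall x, ~~ witness j x) ->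
  (#|point_vectors A| * #|F| ^ (h * k) <=
   (#|F| ^ h - 1) ^ k * (#|F| ^ \rank (fspan A [set: E]) - #|F| ^ (h * k))
   + #|F| ^ (h * k) * (#|F| ^ (h * k) - 1))%N.
Proof.
move=> no_witness; apply: leq_trans (leq_mul card_points_le (leqnn _)) _.
rewrite mulnDl [X in (_ <= _ + X)%N]mulnC leq_add2r.
apply: leq_trans (outside_iter no_witness (leqnn k)) _.
by rewrite leq_mul2l card_outside0 orbT.
Qed.

Variable M : matroid E.
Hypothesis M_rank : forall S, M S = \rank (fspan A S).

Lemma witness_AG j x : (j < k)%N -> witness j x ->
  contr_has_AG_restriction M (tail C h j.+1) h #|F|.
Proof.
move=> lt_jk /andP[xL /forallP x_plus]; have [rk_block cap0] := block_indep lt_jk.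
pose B : 'M_(h, m) := castmx (rk_block, erefl m) (row_base (Lblock j)).
have eqB : (B :=: Lblock j)%MS := eqmx_trans (eqmx_cast _ _) (eq_row_base _).
have freeB : row_free B by rewrite row_free_castmx row_base_free.
have Phi_indep : forall r : 'rV_(1 + h), (r *m col_mx x B <= Ltail j.+1)%MS -> r = 0.
  apply: col_mx_free_mod xL _ (Ltail_sub _) freeB _.
    by rewrite eqB (submx_trans (Lblock_sub_tail j) (Ltail_sub j)).
  by move=> v; rewrite eqB; apply: cap0.
have /fin_all_exists[g g_line] (v : 'rV_h) : exists e,
    (A e + Ltail j.+1 :=: row_mx 1%:M v *m col_mx x B + Ltail j.+1)%MS.
  rewrite mul_row_col mul1mx.
  have /(implyP (x_plus (v *m B))) : (v *m B <= Lblock j)%MS by rewrite -eqB submxMl.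
  rewrite inE => /exists_inP[p]; rewrite inE => /andP[nz_p /existsP[e pe]] xp.
  by exists e; apply: addsmx_rV_eqmx pe xp.
by apply: (contr_AG_of_lifts Phi_indep _ M_rank) => v; apply: g_line.
Qed.

End Cosets.

(* Imported only now: Reals rebinds [_ ^ _] on nat to [Nat.pow] (as in the
   statement of lemma7p1), whereas the development above uses [expn]. *)
From Stdlib Require Import Reals Lra Psatz.

Section RealBounds.
Local Open Scope R_scope.

Lemma pow_one_sub_bernoulli (x : R) (k : nat) :
  0 <= x <= 1 -> (1 - x) ^ k * (1 + INR k * x) <= 1.
Proof.
move=> x01; elim: k => [|k IHk]; first by rewrite /=; lra.
have pow_ge0 : 0 <= (1 - x) ^ k by apply: pow_le; lra.
have xx_ge0 : 0 <= x * x * (1 + INR k) by have := pos_INR k; nra.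
rewrite S_INR /=; nra.
Qed.

Lemma pow_one_sub_small (a x : R) (k : nat) :
  0 < a -> 0 < x <= 1 / 2 -> (0 < k)%nat -> INR k * x >= 2 * (1 / a - 1) ->
  (1 - x) ^ k <= a * (1 - x * x / 2).
Proof.
move=> a_gt0 x_small k_gt0 kx_ge.
have bern := @pow_one_sub_bernoulli x k ltac:(lra).
have pow_ge0 : 0 <= (1 - x) ^ k by apply: pow_le; lra.
have pow_le : (1 - x) ^ k <= 1 - x.
  rewrite -(prednK k_gt0) /=.
  have : (1 - x) ^ k.-1 <= 1 ^ k.-1 by apply: pow_incr; lra.
  by rewrite pow1; nra.
case: (Rle_lt_dec (1 - x) (a * (1 - x * x / 2))) => [|small_a]; first lra.
have : (1 - x) ^ k * (2 / a - 1) <= 1.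
  apply: Rle_trans bern; apply: Rmult_le_compat_l => //.
  have : 2 * (1 / a - 1) = 2 / a - 2 by field; lra.
  lra.
have -> : 2 / a - 1 = (2 - a) / a by field; lra.
move=> le1; have : (1 - x) ^ k * (2 - a) <= a.
  have := Rmult_le_compat_l a _ _ (Rlt_le _ _ a_gt0) le1.
  have -> : a * ((1 - x) ^ k * ((2 - a) / a)) = (1 - x) ^ k * (2 - a) by field; lra.
  lra.
move=> le_a; have ge1 : 1 <= (2 - a) * (1 - x * x / 2) by nra.
have : (1 - x) ^ k * (2 - a) * (1 - x * x / 2) <= a * (1 - x * x / 2).
  by apply: Rmult_le_compat_r; nra.
nra.
Qed.

(* Read a = alpha, Q = q^h, T = q^r, D = q^(hk), P = |point_vectors|, e = eps M. *)
Lemma dense_count_contra (a q Q T D P e : R) (k : nat) :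
  0 < a -> 1 < q -> 2 <= Q -> 1 < T -> (0 < k)%nat -> D = Q ^ k ->
  T >= D * Q ^ 2 * (2 / a) -> INR k >= 2 * Q * (1 / a - 1) ->
  e >= a * ((T - 1) / (q - 1)) -> (q - 1) * e <= P -> P <= T - 1 ->
  P * D <= (Q - 1) ^ k * (T - D) + D * (D - 1) -> False.
Proof.
move=> a_gt0 q_gt1 Q_ge2 T_gt1 k_gt0 defD T_ge k_ge e_ge P_ge P_le PD_le.
have aT_le : a * (T - 1) <= P.
  apply: Rle_trans P_ge; have -> : a * (T - 1) = (q - 1) * (a * ((T - 1) / (q - 1))).
    by field; lra.
  by apply: Rmult_le_compat_l; lra.
have a_le1 : a <= 1 by nra.
pose x := 1 / Q; have xQ : x * Q = 1 by rewrite /x; field; lra.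
have x_small : 0 < x <= 1 / 2.
  split; first by apply: Rdiv_lt_0_compat; lra.
  by apply: Rmult_le_reg_r (_ : 0 < Q) _; lra.
have D_gt0 : 0 < D by rewrite defD; apply: pow_lt; lra.
have kx_ge : INR k * x >= 2 * (1 / a - 1).
  have := Rmult_le_compat_r x _ _ (Rlt_le _ _ (proj1 x_small)) (Rge_le _ _ k_ge).
  have -> : 2 * Q * (1 / a - 1) * x = 2 * (1 / a - 1) by rewrite /x; field; lra.
  lra.
have beta_le := pow_one_sub_small a_gt0 x_small k_gt0 kx_ge.
have betaD : (1 - x) ^ k * D = (Q - 1) ^ k.
  by rewrite defD -Rpow_mult_distr; congr (_ ^ _); rewrite /x; field; lra.
have beta_gt0 : 0 < (1 - x) ^ k by apply: pow_lt; lra.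
have P_le' : P <= (1 - x) ^ k * (T - D) + D - 1.
  apply: (Rmult_le_reg_r D) => //; rewrite -betaD in PD_le; nra.
have gap : D <= (a - (1 - x) ^ k) * T.
  have -> : D = a * (x * x / 2) * (D * Q ^ 2 * (2 / a)) by rewrite /x; field; lra.
  have c_ge0 : 0 <= a * (x * x / 2) by nra.
  apply: Rle_trans (_ : a * (x * x / 2) * T <= _).
    by apply: Rmult_le_compat_l; lra.
  by apply: Rmult_le_compat_r; lra.
nra.
Qed.

Lemma pow_ge_of_ln (b c : R) (n N : nat) : 1 < b -> 0 < c ->
  INR n >= INR N + ln c / ln b -> b ^ n >= b ^ N * c.
Proof.
move=> b_gt1 c_gt0 n_ge.
have ln_b : 0 < ln b by rewrite -ln_1; apply: ln_increasing; lra.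
have bn_gt0 : 0 < b ^ n by apply: pow_lt; lra.
have bN_gt0 : 0 < b ^ N by apply: pow_lt; lra.
apply: Rle_ge; apply: Rnot_lt_le => /(ln_increasing _ _ bn_gt0).
rewrite ln_mult // !ln_pow; try lra.
have : INR N * ln b + ln c <= INR n * ln b.
  have -> : INR N * ln b + ln c = (INR N + ln c / ln b) * ln b by field; lra.
  by apply: Rmult_le_compat_r; lra.
lra.
Qed.

End RealBounds.

Lemma INR_expn (a n : nat) : INR (expn a n) = (INR a ^ n)%R.
Proof. by elim: n => [|n IHn] //; rewrite expnS mult_INR IHn. Qed.

Lemma dense_count_contra_nat (a : R) (q n h k r e P : nat) :
  (0 < a)%R -> (1 < q)%nat -> (0 < h)%nat -> (0 < k)%nat ->
  (n <= r)%nat -> (h * k <= r)%nat ->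
  (INR n >= INR ((2 + k) * h) + ln (2 / a) / ln (INR q))%R ->
  (INR k >= 2 * INR (q ^ h) * (1 / a - 1))%R ->
  (INR e >= a * ((INR (q ^ r) - 1) / (INR q - 1)))%R ->
  ((q - 1) * e <= P)%nat -> (P <= expn q r - 1)%nat ->
  (P * expn q (h * k) <=
     expn (expn q h - 1) k * (expn q r - expn q (h * k))
     + expn q (h * k) * (expn q (h * k) - 1))%nat ->
  False.
Proof.
move=> a_gt0 q_gt1 h_gt0 k_gt0 n_le_r hk_le_r n_ge k_ge e_ge eP_le P_le PD_le.
have q_pos : (0 < q)%nat by apply: ltnW.
have expn_ge1 i : (1 <= expn q i)%nat by rewrite expn_gt0 q_pos.
have le_expn i j : (i <= j)%nat -> (expn q i <= expn q j)%nat.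
  by move=> le_ij; rewrite leq_pexp2l.
have qR_ge2 : (2 <= INR q)%R by apply: (le_INR 2); apply/leP.
have pow_ge_q i : (0 < i)%nat -> (INR q <= INR q ^ i)%R.
  by move=> i_gt0; rewrite -{1}(pow_1 (INR q)); apply: Rle_pow; [lra | apply/leP].
have hk_gt0 : (0 < h * k)%nat by rewrite muln_gt0 h_gt0.
apply: (@dense_count_contra a (INR q) (INR q ^ h) (INR q ^ r) (INR q ^ (h * k))
  (INR P) (INR e) k) => //; try lra.
- by have := pow_ge_q h h_gt0; lra.
- by have := pow_ge_q r (leq_trans hk_gt0 hk_le_r); lra.
- by rewrite pow_mult.
- rewrite -pow_mult -pow_add (_ : (h * k + h * 2 = (2 + k) * h)%coq_nat); last by lia.
  apply: (Rge_trans _ (INR q ^ n)); last first.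
    by apply: pow_ge_of_ln n_ge; [lra | apply: Rdiv_lt_0_compat; lra].
  by apply: Rle_ge; apply: Rle_pow; [lra | apply/leP].
- by rewrite pow_INR in k_ge.
- by rewrite pow_INR in e_ge.
- have := le_INR _ _ (leP eP_le); rewrite mult_INR minus_INR //; exact/leP/ltnW.
- have := le_INR _ _ (leP P_le); rewrite minus_INR ?INR_expn //; exact/leP.
have := le_INR _ _ (leP PD_le).
rewrite plus_INR !mult_INR !INR_expn !minus_INR ?INR_expn //.
all: by apply/leP; rewrite ?le_expn.
Qed.

Lemma prime_power_gt1 q : prime_power q -> (1 < q)%nat.
Proof.
case=> p [e [p_prime e_gt0 ->]].
by rewrite -(expn0 p) ltn_exp2l ?prime_gt1.
Qed.

Theorem lemma7p1 (alpha : R) (q n h k : nat) :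
  (0 < alpha)%R -> prime_power q ->
  (0 < n)%N -> (0 < h)%N -> (0 < k)%N ->
  (INR n >= INR ((2 + k) * h) + ln (2 / alpha) / ln (INR q))%R ->
  (INR k >= 2 * INR (q ^ h) * (1 / alpha - 1))%R ->
  forall (E : finType) (M : matroid E),
    GFq_representable q M ->
    (n <= rk M)%N ->
    (INR (eps M) >= alpha * ((INR (q ^ rk M) - 1) / (INR q - 1)))%R ->
    forall C : {set E}, indep M C -> #|C| = (h * k)%N ->
      exists C' : {set E}, C' \subset C /\ contr_has_AG_restriction M C' h q.
Proof.
move=> alpha_gt0 /prime_power_gt1 q_gt1 _ h_gt0 k_gt0 n_ge k_ge E M
  [F [card_F [m [A M_vrank]]]] n_le_r eps_ge C /eqP indep_C card_C.
have M_rank S : M S = \rank (fspan A S) by rewrite M_vrank.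
rewrite M_rank in indep_C.
case: (boolP [exists j : 'I_k, exists x, witness A C h j x]).
  case/existsP=> j /existsP[x wx]; exists (tail C h j.+1); split; first exact: tail_sub.
  by rewrite -card_F; exact (witness_AG card_C indep_C M_rank (ltn_ord j) wx).
rewrite negb_exists => /forallP no_witness; exfalso.
have {}no_witness j : (j < k)%N -> forall x, ~~ witness A C h j x.
  by move=> lt_jk x; have := no_witness (Ordinal lt_jk); rewrite negb_exists => /forallP.
have rk_M : rk M = \rank (fspan A [set: E]) by rewrite /rk M_rank.
rewrite rk_M in n_le_r eps_ge.
apply: (dense_count_contra_nat alpha_gt0 q_gt1 h_gt0 k_gt0 n_le_r _ n_ge k_ge eps_ge).
- by rewrite -card_C -indep_C mxrankS // fspanS ?subsetT.
- by rewrite -card_F; apply: eps_le_points.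
- by rewrite -card_F; apply: card_points_le_full.
by rewrite -card_F; apply: card_points_no_witness card_C indep_C no_witness.
Qed.
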